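(* Define polynomials in one variable $m$ by \[{}^{\mathsf{NF}}\!P_0(m)=m,\qquad {}^{\mathsf{NF}}\!P_{n+1}(m)={}^{\mathsf{NF}}\!P_n(m+1)+{}^{\mathsf{NF}}\!Q_{n+1}(m),\] \[{}^{\mathsf{NF}}\!Q_0(m)=m,\qquad {}^{\mathsf{NF}}\!Q_{n+1}(m)=\sum_{k=0}^{n}{}^{\mathsf{NF}}\!P_k(m)\,{}^{\mathsf{NF}}\!Q_{n-k}(m).\] Then for every $n\ge 0$, the degrees of ${}^{\mathsf{NF}}\!P_n$ and of ${}^{\mathsf{NF}}\!Q_n$ are both equal to $n+1$.
   Context: ${}^{\mathsf{NF}}\!P_n(m)$ counts beta-normal forms of size $n$ (de Bruijn indices of size $0$, abstraction and application of size $1$) with at most $m$ distinct free indices, and ${}^{\mathsf{NF}}\!Q_n(m)$ counts neutral normal forms (those headed by an index) of size $n$ with at most $m$ distinct free indices; this interpretation is not needed for the claim. *)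

From HB Require Import structures.
From mathcomp Require Import all_boot all_order all_algebra.
Set Implicit Arguments. Unset Strict Implicit. Unset Printing Implicit Defensive.
Import GRing.Theory.
Local Open Scope ring_scope.

(* NFPQ n = ([:: P_0; ...; P_n], [:: Q_0; ...; Q_n]) with integer coefficients. *)
Fixpoint NFPQ (n : nat) : seq {poly int} * seq {poly int} :=
  match n with
  | 0 => ([:: 'X], [:: 'X])
  | n'.+1 =>
      let ps := (NFPQ n').1 in
      let qs := (NFPQ n').2 in
      let q := \sum_(k < n'.+1) ps`_k * qs`_(n' - k) in
      let p := (ps`_n') \Po ('X + 1) + q in
      (rcons ps p, rcons qs q)
  end.

Definition NFP (n : nat) : {poly int} := (NFPQ n).1`_n.
Definition NFQ (n : nat) : {poly int} := (NFPQ n).2`_n.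

From HB Require Import structures.
From mathcomp Require Import all_boot all_order all_algebra.
Import Order.POrderTheory GRing.Theory Num.Theory.
Local Open Scope ring_scope.

(* All coefficients of the recursion are nonnegative, so no cancellation can
   occur: by strong induction, P_n and Q_n have degree n + 1 and a positive
   leading coefficient.  Each product P_k Q_(n-k) then has degree n + 2 with
   positive leading coefficient, hence so does their sum Q_(n+1); and
   P_n(m + 1) has degree only n + 1, so it cannot affect the leading term of
   P_(n+1). *)

Section PositiveLeadingCoefficient.
Context {R : numDomainType}.
Implicit Types p q : {poly R}.

(* [size p <= d.+1] rather than equality makes closure under sums immediate. *)
Definition deg_pos (d : nat) p := (size p <= d.+1)%N /\ 0 < p`_d.

Lemma deg_posP d p : deg_pos d p <-> size p = d.+1 /\ 0 < lead_coef p.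
Proof.
split=> [[le_p_d p_d_gt0] | [size_p]]; last by rewrite lead_coefE size_p; split; rewrite ?size_p.
suff size_p : size p = d.+1 by rewrite lead_coefE size_p.
apply/eqP; rewrite eqn_leq le_p_d ltnNge; apply/negP => le_p_d'.
by move: p_d_gt0; rewrite nth_default ?ltxx.
Qed.

Lemma deg_pos_sum {I : finType} (i0 : I) d (F : I -> {poly R}) :
  (forall i, deg_pos d (F i)) -> deg_pos d (\sum_i F i).
Proof.
move=> posF; split.
  apply: leq_trans (size_sum _ _ _) _.
  by apply/bigmax_leqP => i _; have [] := posF i.
rewrite coef_sum (bigD1 i0) //=; apply: ltr_wpDr; last by have [] := posF i0.
by apply: sumr_ge0 => i _; have [_ /ltW] := posF i.
Qed.

Lemma deg_posM m n p q :
  deg_pos m p -> deg_pos n q -> deg_pos (m + n) (p * q).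
Proof.
move=> /deg_posP[size_p lead_p] /deg_posP[size_q lead_q]; apply/deg_posP.
have p_neq0 : p != 0 by rewrite -size_poly_eq0 size_p.
have q_neq0 : q != 0 by rewrite -size_poly_eq0 size_q.
by rewrite size_mul // size_p size_q addnS lead_coefM mulr_gt0.
Qed.

Lemma deg_posDl d p q : (size p <= d)%N -> deg_pos d q -> deg_pos d (p + q).
Proof.
move=> le_p_d [le_q_d q_d_gt0]; split.
  by apply: leq_trans (size_polyD _ _) _; rewrite geq_max le_q_d (leqW le_p_d).
by rewrite coefD nth_default // add0r.
Qed.

End PositiveLeadingCoefficient.

Lemma size_NFPQ n : size (NFPQ n).1 = n.+1 /\ size (NFPQ n).2 = n.+1.
Proof. by elim: n => [|n [IH1 IH2]] //=; rewrite !size_rcons IH1 IH2. Qed.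

Lemma nth_NFPQ [n k] :
  (k <= n)%N -> (NFPQ n).1`_k = NFP k /\ (NFPQ n).2`_k = NFQ k.
Proof.
elim: n => [|n IH] le_k_n; first by move: le_k_n; rewrite leqn0 => /eqP ->.
case: (ltngtP k n.+1) => [lt_k_n | | -> //]; last by rewrite ltnNge le_k_n.
have [size1 size2] := size_NFPQ n.
by rewrite /= !nth_rcons size1 size2 lt_k_n; apply: IH.
Qed.

Lemma NFQ_convolution n :
  \sum_(k < n.+1) (NFPQ n).1`_k * (NFPQ n).2`_(n - k)
  = \sum_(k < n.+1) NFP k * NFQ (n - k).
Proof.
apply: eq_bigr => k _.
by rewrite (nth_NFPQ (leq_ord k)).1 (nth_NFPQ (leq_subr k n)).2.
Qed.

Lemma NFQ_S n : NFQ n.+1 = \sum_(k < n.+1) NFP k * NFQ (n - k).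
Proof.
have [_ size2] := size_NFPQ n.
by rewrite -NFQ_convolution /NFQ /= nth_rcons size2 ltnn eqxx.
Qed.

Lemma NFP_S n : NFP n.+1 = NFP n \Po ('X + 1) + NFQ n.+1.
Proof.
have [size1 _] := size_NFPQ n.
by rewrite NFQ_S -NFQ_convolution /NFP /= nth_rcons size1 ltnn eqxx.
Qed.

Lemma deg_pos_NFPQ n : deg_pos n.+1 (NFP n) /\ deg_pos n.+1 (NFQ n).
Proof.
elim/ltn_ind: n => -[|n] IH.
  by rewrite /NFP /NFQ /deg_pos /= size_polyX coefX ltr01.
have posQ : deg_pos n.+2 (NFQ n.+1).
  rewrite NFQ_S; apply: (deg_pos_sum ord0) => k.
  have [posP _] := IH k (leq_ord k).
  have [_ posQk] := IH (n - k)%N (leq_ltn_trans (leq_subr k n) (ltnSn n)).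
  have -> : n.+2 = (k.+1 + (n - k).+1)%N by rewrite addSn addnS subnKC ?leq_ord.
  exact: deg_posM posP posQk.
split=> //; rewrite NFP_S; apply: deg_posDl posQ.
have [/deg_posP[size_Pn _] _] := IH n (ltnSn n).
by rewrite -polyC1 size_comp_poly2 ?size_XaddC // size_Pn.
Qed.

Theorem lemma3 (n : nat) :
  (size (NFP n)).-1 = n.+1 /\ (size (NFQ n)).-1 = n.+1.
Proof.
by have [/deg_posP[-> _] /deg_posP[-> _]] := deg_pos_NFPQ n.
Qed.
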